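(* Let $r\ge 2$, let $\lambda,\mu\in\Lambda$ with $\lambda\sim_e\mu$, and let $s\in\mathbb{Z}$. Then $\eta(\lambda,s)\approx_r\eta(\mu,s)$ (in $\mathcal{A}_r^e$) if and only if $\Phi_r(\lambda,s)\approx_e\Phi_r(\mu,s)$ (in $\mathcal{A}_e^r$).
   Context: Fix an integer $e\ge 2$. A partition is a weakly decreasing sequence $\lambda=(\lambda_1,\lambda_2,\dots)$ of non-negative integers with finite sum $|\lambda|$; $\Lambda$ denotes the set of partitions and $\Lambda^{(m)}$ the set of $m$-multipartitions, i.e. $m$-tuples $\boldsymbol\lambda=(\lambda^{(1)},\dots,\lambda^{(m)})$ of partitions, with $|\boldsymbol\lambda|=\sum_k|\lambda^{(k)}|$. A $\beta$-set is a subset $B\subseteq\mathbb{Z}$ containing all sufficiently small integers and no sufficiently large ones. For $\lambda\in\Lambda$ and $s\in\mathbb{Z}$ set $B_s(\lambda)=\{\lambda_i-i+s : i\ge 1\}$; every $\beta$-set equals $B_s(\lambda)$ for a unique pair $(\lambda,s)$. For $N\ge 2$ let $\mathcal{A}_N=\Lambda\times\mathbb{Z}$ (abacus configurations with $N$ runners) and $\mathcal{A}_N^m=\Lambda^{(m)}\times\mathbb{Z}^m$, where $(\boldsymbol\lambda,\mathbf{s})$ is identified with the $m$-tuple of $\beta$-sets $(B_{s_1}(\lambda^{(1)}),\dots,B_{s_m}(\lambda^{(m)}))$. Blocks: for $(\boldsymbol\lambda,\mathbf{s})\in\mathcal{A}_N^m$, its $N$-residue multiset is the multiset of the values $s_k+y-x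 \bmod N$ over all nodes $(x,y,k)$ with $x\ge1$, $1\le y\le\lambda^{(k)}_x$, $1\le k\le m$. Define $(\boldsymbol\lambda,\mathbf{s})\approx_N(\boldsymbol\mu,\mathbf{s}')$ iff $\mathbf{s}=\mathbf{s}'$, $|\boldsymbol\lambda|=|\boldsymbol\mu|$ and the $N$-residue multisets coincide. Its equivalence classes are called blocks. The map $\eta$: for $(\lambda,s)\in\mathcal{A}_e$ with $B=B_s(\lambda)$ and $0\le i<e$, the set $C_i=\{(b-i)/e : b\in B,\ b\equiv i \bmod e\}$ is a $\beta$-set, so $C_i=B_{t_i}(\rho_i)$ for a unique $(\rho_i,t_i)\in\Lambda\times\mathbb{Z}$; set $\eta(\lambda,s)=((\rho_0,\dots,\rho_{e-1}),(t_0,\dots,t_{e-1}))\in\Lambda^{(e)}\times\mathbb{Z}^e$, which we also regard as an element of $\mathcal{A}_r^e$. The $e$-weight of $\lambda$ is $\mathrm{wt}(\lambda)=\sum_i|\rho_i|$. For $\lambda,\mu\in\Lambda$ write $\lambda\sim_e\mu$ if $(\lambda,s)\approx_e(\mu,s)$ for some (equivalently any) $s\in\mathbb{Z}$. Uglov's map: for $1\le k\le r$ define $\psi_k:\mathbb{Z}\to\mathbb{Z}$ by $\psi_k(ae+i)=((a+1)r-k)e+i$ for $a\in\mathbb{Z}$, $0\le i<e$. For $(\boldsymbol\lambda,\mathbf{s})\in\mathcal{A}_e^r$ the set $B=\bigsqcup_{k=1}^r\psi_k(B_{s_k}(\lambda^{(k)}))$ is a $\beta$-set, and $\Psi_r(\boldsymbol\lambda,\mathbf{s})$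 is the unique $(\tilde\lambda,\tilde s)\in\mathcal{A}_e$ with $B_{\tilde s}(\tilde\lambda)=B$. $\Psi_r:\mathcal{A}_e^r\to\mathcal{A}_e$ is a bijection; $\Phi_r=\Psi_r^{-1}$. *)

From Stdlib Require Import ClassicalEpsilon.
From mathcomp Require Import all_boot all_order all_algebra.
Unset Printing Implicit Defensive.
Import Order.TTheory GRing.Theory Num.Theory.
Local Open Scope ring_scope.

(* Partitions: finite weakly decreasing sequences of positive integers
   (the trailing zeros of lambda = (lambda_1, lambda_2, ...) are omitted). *)
Definition is_part (l : seq nat) : bool := sorted geq l && (0%N \notin l).
Definition Partition := {l : seq nat | is_part l}.

Lemma is_part_nil : is_part [::]. Proof. by []. Qed.
Definition empty_part : Partition := exist _ [::] is_part_nil.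

(* lambda_i, 1-indexed; 0 beyond the length *)
Definition part_nth (p : Partition) (i : nat) : nat := nth 0%N (sval p) i.-1.
Definition psize (p : Partition) : nat := sumn (sval p).

Definition beta (s : int) (p : Partition) : int -> Prop :=
  fun b => exists i : nat, (1 <= i)%N /\ b = (part_nth p i)%:Z - i%:Z + s.

(* m-multipartitions and multicharges; component k (1 <= k <= m) is index k-1 *)
Definition mpart (m : nat) := {ffun 'I_m -> Partition}.
Definition mcharge (m : nat) := {ffun 'I_m -> int}.
Definition conf := (Partition * int)%type.
Definition mconf (m : nat) := (mpart m * mcharge m)%type.

Definition mpsize m (l : mpart m) : nat := \sum_(k < m) psize (l k).

Definition res_seq1 (N : nat) (p : Partition) (s : int) : seq int :=
  [seq ((s + y%:Z - x%:Z) %% N%:Z)%Z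
     | x <- iota 1 (size (sval p)), y <- iota 1 (part_nth p x)].

(* N-residue multiset (as a sequence, compared up to permutation) *)
Definition res_seq (N m : nat) (c : mconf m) : seq int :=
  flatten [seq res_seq1 N (c.1 k) (c.2 k) | k <- enum 'I_m].

Definition block_eq (N m : nat) (c d : mconf m) : Prop :=
  c.2 = d.2 /\ mpsize m c.1 = mpsize m d.1 /\ perm_eq (res_seq N m c) (res_seq N m d).

Definition block_eq1 (N : nat) (c d : conf) : Prop :=
  c.2 = d.2 /\ psize c.1 = psize d.1 /\
  perm_eq (res_seq1 N c.1 c.2) (res_seq1 N d.1 d.2).

Definition sim_e (e : nat) (l m : Partition) : Prop :=
  exists s : int, block_eq1 e (l, s) (m, s).

Definition default_mconf (m : nat) : mconf m :=
  ([ffun => empty_part], [ffun => 0]).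

Definition Cset (e : nat) (B : int -> Prop) (i : nat) : int -> Prop :=
  fun c => exists b, B b /\ (b %% e%:Z)%Z = i%:Z /\ c = ((b - i%:Z) %/ e%:Z)%Z.

Definition eta (e : nat) (c : conf) : mconf e :=
  epsilon (inhabits (default_mconf e))
    (fun rt : mconf e => forall i : 'I_e, forall z : int,
        beta (rt.2 i) (rt.1 i) z <-> Cset e (beta c.2 c.1) i z).

Definition psi (e r k : nat) (z : int) : int :=
  ((((z %/ e%:Z)%Z + 1) * r%:Z - k%:Z) * e%:Z + (z %% e%:Z)%Z).

Definition Uglov_set (e r : nat) (c : mconf r) : int -> Prop :=
  fun b => exists (k : 'I_r) (z : int),
      beta (c.2 k) (c.1 k) z /\ b = psi e r k.+1 z.

Definition Psi (e r : nat) (c : mconf r) : conf :=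
  epsilon (inhabits (empty_part, 0))
    (fun p : conf => forall b, beta p.2 p.1 b <-> Uglov_set e r c b).

Definition Phi (e r : nat) (p : conf) : mconf r :=
  epsilon (inhabits (default_mconf r)) (fun c : mconf r => Psi e r c = p).

(* The quantities compared by both block relations are linear in the indicator
   of the beta-set.  For beta-sets B, B' put  d(h) = sum_b (1_B(b) - 1_B'(b)) h(b),
   a finite sum.  The charge difference of B and B' is d(1), and the difference of
   their numbers of nodes of N-residue j is d(b |-> floor((b - j) / N)).  Both eta
   and Phi_r only redistribute the elements of a beta-set among runners (eta via
   b |-> (b mod e, b div e), Phi_r by inverting Uglov's psi_k), so every invariant of
   the images of (lam, s) and (mu, s) is again of the form d(h) for B = B_s(lam),
   B' = B_s(mu); and lam ~_e mu says that d vanishes on 1 and on every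
   b |-> floor((b - j) / e).  With X_j = d(b |-> floor((floor(b / e) - j) / r)), the
   eta-images are r-block equivalent iff X_j = 0 for all j < r, whereas on the
   Phi_r side the charge difference on runner k+1 is X_(r-1-k) - X_(r-k) and, once
   the charges agree, every e-residue count difference is X_0.  As X_r = X_0, the
   two conditions are equivalent by telescoping. *)

From Stdlib Require Import ClassicalEpsilon.
From mathcomp Require Import all_boot all_order all_algebra zify.
Import Order.TTheory GRing.Theory Num.Theory.
Set Implicit Arguments.
Unset Strict Implicit.
Local Open Scope ring_scope.

Definition ind (P : Prop) : int := if excluded_middle_informative P then 1 else 0.

Lemma indT (P : Prop) : P -> ind P = 1.
Proof. by rewrite /ind; case: excluded_middle_informative. Qed.

Lemma indF (P : Prop) : ~ P -> ind P = 0.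
Proof. by rewrite /ind; case: excluded_middle_informative. Qed.

Lemma ind_iff (P Q : Prop) : (P <-> Q) -> ind P = ind Q.
Proof.
by move=> hPQ; rewrite /ind; case: excluded_middle_informative => hP;
  case: excluded_middle_informative => hQ //; exfalso; tauto.
Qed.

Lemma sum_delta_mul n (i : 'I_n) (F : 'I_n -> int) :
  \sum_(i' < n) ((i' == i) : int) * F i' = F i.
Proof.
rewrite (bigD1 i) //= eqxx mul1r big1 ?addr0 // => i' hi'.
by rewrite (negbTE hi') mul0r.
Qed.

Lemma modz_bounds (b : int) (N : nat) : (0 < N)%N -> 0 <= (b %% N%:Z)%Z < N%:Z.
Proof. by move=> hN; rewrite modz_ge0 ?ltz_pmod //=; lia. Qed.

Lemma divzMDl_small (c i : int) (N : nat) : (0 < N)%N -> 0 <= i < N%:Z ->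
  ((c * N%:Z + i) %/ N%:Z)%Z = c.
Proof. by move=> hN hi; rewrite divzMDl ?divz_small ?addr0 //; lia. Qed.

Lemma modzMDl_small (c i : int) (N : nat) : (0 < N)%N -> 0 <= i < N%:Z ->
  ((c * N%:Z + i) %% N%:Z)%Z = i.
Proof. by move=> hN hi; rewrite modzMDl modz_small //; lia. Qed.

Lemma divzS (z : int) (N : nat) : (0 < N)%N ->
  ((z + 1) %/ N)%Z = (z %/ N)%Z + ((z + 1) %% N == 0)%Z%:Z.
Proof. by move=> hN; case: eqP => h /=; nia. Qed.

Lemma modz_sub_eq0 (a j : int) (N : nat) : (0 < N)%N -> 0 <= j < N%:Z ->
  (((a - j) %% N)%Z == 0) = ((a %% N)%Z == j).
Proof.
move=> hN hj; rewrite -modzDml.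
have := modz_bounds a hN; move: (a %% N)%Z => m hm.
case: (lerP j m) => hjm.
  by rewrite modz_small; [apply/eqP/eqP|]; lia.
have -> : m - j = (-1) * N%:Z + (m - j + N%:Z) by lia.
by rewrite modzMDl modz_small; [apply/eqP/eqP|]; lia.
Qed.

(** * Beta-sets *)

Definition beta_nth (p : Partition) (s : int) (i : nat) : int :=
  (part_nth p i)%:Z - i%:Z + s.

Lemma part_nth_default p i : (size (sval p) < i)%N -> part_nth p i = 0%N.
Proof. by move=> h; rewrite /part_nth nth_default //; lia. Qed.

Lemma part_nth_nonincr p i j : (i <= j)%N -> (part_nth p j <= part_nth p i)%N.
Proof.
case: p => l hp hij; case/andP: (hp) => hs _; rewrite /part_nth /=.
case: (ltnP j.-1 (size l)) => hj; last by rewrite (nth_default _ hj).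
have := @sorted_leq_nth _ geq (fun a b c h1 h2 => leq_trans h2 h1) leqnn 0%N l hs.
by move=> /(_ i.-1 j.-1); rewrite !inE; apply; lia.
Qed.

Lemma part_nth_gt0 p i : (1 <= i)%N -> (i <= size (sval p))%N -> (0 < part_nth p i)%N.
Proof.
case: p => l hp h1 h2; case/andP: (hp) => _ h0; rewrite /part_nth /=.
have : nth 0%N l i.-1 \in l by apply: mem_nth; move: h2 => /=; lia.
by case: (nth 0%N l i.-1) => //; rewrite (negbTE h0).
Qed.

Lemma beta_nth_decr p s i j : (i < j)%N -> beta_nth p s j < beta_nth p s i.
Proof. by move=> h; rewrite /beta_nth; have := part_nth_nonincr p (ltnW h); lia. Qed.

Lemma beta_nth_inj p s : injective (beta_nth p s).
Proof.
move=> i j h; case: (ltngtP i j) => // hij; have := beta_nth_decr p s hij;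
  by rewrite h ltxx.
Qed.

Definition bounded (P : int -> Prop) (K : nat) :=
  (forall b, b < - K%:Z -> P b) /\ (forall b, K%:Z <= b -> ~ P b).

Definition beta_radius (p : Partition) (s : int) : nat :=
  (`|s| + size (sval p) + part_nth p 1)%N.

Lemma bounded_beta p s K : (beta_radius p s <= K)%N -> bounded (beta s p) K.
Proof.
rewrite /beta_radius => hK; split=> b hb.
  by exists `|s - b|%N; split; [lia | rewrite part_nth_default; lia].
by move=> [i [hi hbi]]; rewrite hbi in hb; have := part_nth_nonincr p hi; lia.
Qed.

(** * Signed sums over beta-sets *)

Definition wsum (K : nat) (F : int -> int) : int := \sum_(k < K + K) F (- K%:Z + k%:Z).

Lemma sum_beta_nth_eq p s (L : nat) b : (size (sval p) <= L)%N -> s - L%:Z <= b ->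
  \sum_(x < L) ((beta_nth p s x.+1 == b) : int) = ind (beta s p b).
Proof.
move=> hL hb; case: (classic (beta s p b)) => hB; last first.
  rewrite indF // big1 // => x _; case: eqP => // h; case: hB.
  by exists x.+1.
rewrite indT //; case: hB => i [hi hbi].
have hiL : (i <= L)%N.
  by case: (leqP i L) => // hiL; move: hbi; rewrite part_nth_default; lia.
have hi' : (i.-1 < L)%N by lia.
rewrite (bigD1 (Ordinal hi')) //= big1 => [|x hx].
  have -> : i.-1.+1 = i by lia.
  by rewrite /beta_nth -hbi eqxx addr0.
case: eqP => // h; rewrite hbi in h; move/beta_nth_inj: h => h.
by case/eqP: hx; apply: val_inj => /=; lia.
Qed.

(* The first [s + K] elements of [B_s(p)] are exactly those in the window [-K, K). *)
Lemma sum_beta_nth_wsum p s (K : nat) h : (beta_radius p s <= K)%N ->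
  \sum_(x < absz (s + K%:Z)) h (beta_nth p s x.+1) = wsum K (fun b => ind (beta s p b) * h b).
Proof.
rewrite /beta_radius => hK; set L := absz (s + K%:Z).
have E (k : 'I_(K + K)) : ind (beta s p (- K%:Z + k%:Z)) * h (- K%:Z + k%:Z) =
   \sum_(x < L) ((beta_nth p s x.+1 == - K%:Z + k%:Z) : int) * h (beta_nth p s x.+1).
  rewrite -(@sum_beta_nth_eq p s L); [|lia|lia].
  by rewrite mulr_suml; apply: eq_bigr => x _; case: eqP => [->|]; rewrite ?mul0r.
rewrite /wsum (eq_bigr _ (fun k _ => E k)) exchange_big /=; apply: eq_bigr => x _.
have hx : (0 <= beta_nth p s x.+1 + K%:Z) && (beta_nth p s x.+1 + K%:Z < (K + K)%:Z).
  by have := part_nth_nonincr p (isT : (1 <= x.+1)%N); have := ltn_ord x;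
    rewrite /beta_nth /L; lia.
have hk : (absz (beta_nth p s x.+1 + K%:Z)%R < K + K)%N by lia.
rewrite (bigD1 (Ordinal hk)) //= big1 => [|k hk'].
  have -> : - K%:Z + (absz (beta_nth p s x.+1 + K%:Z))%:Z = beta_nth p s x.+1 by lia.
  by rewrite eqxx mul1r addr0.
case: eqP => h'; last by rewrite mul0r.
by case/eqP: hk'; apply: val_inj => /=; lia.
Qed.

Lemma wsum_beta p s K : (beta_radius p s <= K)%N ->
  wsum K (fun b => ind (beta s p b)) = s + K%:Z.
Proof.
move=> hK; transitivity (wsum K (fun b => ind (beta s p b) * 1)).
  by apply: eq_bigr => k _; rewrite mulr1.
rewrite -(sum_beta_nth_wsum (fun _ => 1) hK) sumr_const card_ord.
by move: hK; rewrite /beta_radius -mulr_natl mulr1; lia.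
Qed.

Lemma iota_succ m : iota 1 m.+1 = iota 1 m ++ [:: m.+1].
Proof. by have := iotaD 1 m 1; rewrite addn1 add1n. Qed.

(* [rfloor N j b - rfloor N j a] counts the integers in (a, b] congruent to j mod N. *)
Definition rfloor (N : nat) (j z : int) : int := ((z - j) %/ N%:Z)%Z.

Lemma count_res_row N j (s x : int) m : (0 < N)%N -> 0 <= j < N%:Z ->
  (count_mem j [seq ((s + y%:Z - x) %% N%:Z)%Z | y <- iota 1 m])%:Z =
  rfloor N j (s - x + m%:Z) - rfloor N j (s - x).
Proof.
move=> hN hj; elim: m => [|m IH]; first by rewrite /= addr0 subrr.
rewrite iota_succ map_cat count_cat PoszD IH /= addn0 /rfloor.
have -> : s - x + m.+1%:Z - j = (s - x + m%:Z - j) + 1 by lia.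
rewrite divzS //; have -> : s - x + m%:Z - j + 1 = (s + m.+1%:Z - x) - j by lia.
by rewrite modz_sub_eq0 //; case: eqP => _ /=; lia.
Qed.

Lemma sumn_iota1 (F : nat -> nat) n :
  (sumn [seq F x | x <- iota 1 n])%:Z = \sum_(x < n) (F x.+1)%:Z.
Proof.
elim: n => [|n IH]; first by rewrite big_ord0.
by rewrite iota_succ map_cat sumn_cat PoszD IH big_ord_recr /= addn0.
Qed.

Lemma count_res_seq1 N j p s L : (0 < N)%N -> 0 <= j < N%:Z -> (size (sval p) <= L)%N ->
  (count_mem j (res_seq1 N p s))%:Z =
  \sum_(x < L) (rfloor N j (beta_nth p s x.+1) - rfloor N j (s - x.+1%:Z)).
Proof.
move=> hN hj hL; rewrite /res_seq1 count_flatten -map_comp sumn_iota1.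
rewrite -(subnKC hL) big_split_ord /= [X in _ = _ + X]big1 ?addr0 => [|x _].
  apply: eq_bigr => x _ /=; rewrite count_res_row //.
  by congr (rfloor _ _ _ - _); rewrite /beta_nth; lia.
rewrite /beta_nth part_nth_default /=; last lia.
have -> : 0%:Z - (size (sval p) + x).+1%:Z + s = s - (size (sval p) + x).+1%:Z by lia.
by rewrite subrr.
Qed.

Lemma eq_modz_rfloor (N i : nat) (b : int) : (i < N)%N ->
  ((absz (b %% N%:Z)%Z == i) : int) = rfloor N i%:Z b - rfloor N i.+1%:Z b.
Proof.
move=> hi; have hN : (0 < N)%N by lia.
rewrite /rfloor; have -> : b - i%:Z = (b - i.+1%:Z) + 1 by lia.
rewrite divzS // addrAC subrr add0r.
have -> : b - i.+1%:Z + 1 = b - i%:Z by lia.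
by rewrite modz_sub_eq0 //; lia.
Qed.

Lemma rfloorNN (N : nat) b : (0 < N)%N -> rfloor N N%:Z b = rfloor N 0 b - 1.
Proof.
move=> hN; rewrite /rfloor subr0.
have -> : b - N%:Z = (-1) * N%:Z + b by lia.
by rewrite divzMDl; lia.
Qed.

(* The signed sum d(h) of the proof idea, truncated to the window [-K, K). *)
Definition dsum (P P' : int -> Prop) (K : nat) (h : int -> int) : int :=
  wsum K (fun b => (ind (P b) - ind (P' b)) * h b).

Section SignedSums.

Variables (P P' : int -> Prop) (K : nat).

Lemma dsumD h1 h2 : dsum P P' K (fun b => h1 b + h2 b) = dsum P P' K h1 + dsum P P' K h2.
Proof. by rewrite /dsum /wsum -big_split /=; apply: eq_bigr => k _; rewrite mulrDr. Qed.

Lemma dsumB h1 h2 : dsum P P' K (fun b => h1 b - h2 b) = dsum P P' K h1 - dsum P P' K h2.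
Proof.
rewrite /dsum /wsum -sumrB /=; apply: eq_bigr => k _; by rewrite mulrBr.
Qed.

Lemma dsumC c : dsum P P' K (fun _ => c) = c * dsum P P' K (fun _ => 1).
Proof. by rewrite /dsum /wsum mulr_sumr; apply: eq_bigr => k _; rewrite mulr1 mulrC. Qed.

Lemma eq_dsum h1 h2 : h1 =1 h2 -> dsum P P' K h1 = dsum P P' K h2.
Proof. by move=> h; rewrite /dsum /wsum; apply: eq_bigr => k _; rewrite h. Qed.

End SignedSums.

Lemma eq_dsum_pred P1 P1' P2 P2' K h : (forall b, P1 b <-> P2 b) ->
  (forall b, P1' b <-> P2' b) -> dsum P1 P1' K h = dsum P2 P2' K h.
Proof.
move=> h1 h2; rewrite /dsum /wsum; apply: eq_bigr => k _.
by rewrite (ind_iff (h1 _)) (ind_iff (h2 _)).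
Qed.

Lemma dsum_widen P P' K0 K h : bounded P K0 -> bounded P' K0 -> (K0 <= K)%N ->
  dsum P P' K h = dsum P P' K0 h.
Proof.
move=> [l1 h1] [l2 h2] hK; rewrite /dsum /wsum.
have -> : (K + K = (K - K0) + ((K0 + K0) + (K - K0)))%N by lia.
rewrite big_split_ord big_split_ord /= big1 ?add0r => [|k _]; last first.
  set b := (X in ind (P X)); have hb : b < - K0%:Z by rewrite /b; have := ltn_ord k; lia.
  by rewrite (indT (l1 _ hb)) (indT (l2 _ hb)) subrr mul0r.
rewrite [X in _ + X]big1 ?addr0 => [|k _]; last first.
  set b := (X in ind (P X)); have hb : K0%:Z <= b by rewrite /b; lia.
  by rewrite (indF (h1 _ hb)) (indF (h2 _ hb)) subrr mul0r.
by apply: eq_bigr => k _; have -> : - K%:Z + (K - K0 + k)%N%:Z = - K0%:Z + k%:Z by lia.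
Qed.

Lemma count_res_seq1_diff N j p p' t K : (0 < N)%N -> 0 <= j < N%:Z ->
  (beta_radius p t <= K)%N -> (beta_radius p' t <= K)%N ->
  (count_mem j (res_seq1 N p t))%:Z - (count_mem j (res_seq1 N p' t))%:Z =
  dsum (beta t p) (beta t p') K (rfloor N j).
Proof.
move=> hN hj hK hK'; set L := absz (t + K%:Z).
rewrite (@count_res_seq1 N j p t L) //; last by move: hK; rewrite /beta_radius; lia.
rewrite (@count_res_seq1 N j p' t L) //; last by move: hK'; rewrite /beta_radius; lia.
rewrite !sumrB !sum_beta_nth_wsum // opprB addrA subrK /dsum /wsum -sumrB.
by apply: eq_bigr => k _; rewrite mulrBl.
Qed.

Lemma charge_diff_dsum p p' t t' K : (beta_radius p t <= K)%N ->
  (beta_radius p' t' <= K)%N -> t - t' = dsum (beta t p) (beta t' p') K (fun _ => 1).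
Proof.
move=> h h'; have -> : t - t' = (t + K%:Z) - (t' + K%:Z) by lia.
rewrite -(wsum_beta h) -(wsum_beta h') /dsum /wsum -sumrB.
by apply: eq_bigr => k _; rewrite mulr1.
Qed.

Lemma sum_ord_blocks (F : int -> int) (M : int) (n m : nat) :
  \sum_(k < n * m) F (M * m%:Z + k%:Z) =
  \sum_(a < n) \sum_(i < m) F ((M + a%:Z) * m%:Z + i%:Z).
Proof.
elim: n => [|n IH]; first by rewrite mul0n !big_ord0.
rewrite mulSnr big_split_ord /= IH big_ord_recr /=; congr (_ + _).
by apply: eq_bigr => i _; congr F; lia.
Qed.

Lemma sum_dsum_residues (e K : nat) (B B' : int -> Prop) (g : nat -> int -> int) :
  (0 < e)%N ->
  \sum_(i < e) dsum (fun c => B (c * e%:Z + i%:Z)) (fun c => B' (c * e%:Z + i%:Z)) K (g i) =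
  dsum B B' (K * e) (fun b => g (absz (b %% e%:Z)%Z) (b %/ e%:Z)%Z).
Proof.
move=> he; rewrite /dsum /wsum exchange_big /=.
set F := fun b => (ind (B b) - ind (B' b)) * g (absz (b %% e%:Z)%Z) (b %/ e%:Z)%Z.
have -> : (K * e + K * e = (K + K) * e)%N by rewrite mulnDl.
transitivity (\sum_(k < (K + K) * e) F ((- K%:Z) * e%:Z + k%:Z)); last first.
  by apply: eq_bigr => k _; rewrite /F PoszM mulNr.
rewrite sum_ord_blocks; apply: eq_bigr => a _; apply: eq_bigr => i _; rewrite /F.
by have hi := ltn_ord i; rewrite modzMDl_small ?divzMDl_small //; lia.
Qed.

(** * Uglov's map *)

(* Inverse of Uglov's map, with a 0-based runner index (see [psi_idxK]). *)
Definition psi_idx (e r : nat) (b : int) : nat := (r.-1 - absz ((b %/ e%:Z)%Z %% r%:Z)%Z)%N.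
Definition psi_arg (e r : nat) (b : int) : int :=
  ((b %/ e%:Z)%Z %/ r%:Z)%Z * e%:Z + (b %% e%:Z)%Z.

Lemma psi_idx_lt e r b : (0 < r)%N -> (psi_idx e r b < r)%N.
Proof. by rewrite /psi_idx; lia. Qed.

Lemma eq_psi_idx_rfloor e r (k : nat) b : (k < r)%N ->
  ((psi_idx e r b == k) : int) =
  rfloor r (r.-1 - k)%N%:Z (b %/ e%:Z)%Z - rfloor r (r - k)%N%:Z (b %/ e%:Z)%Z.
Proof.
move=> hk; have hr : (0 < r)%N by lia.
have -> : (r - k)%N = (r.-1 - k).+1 by lia.
rewrite -eq_modz_rfloor; last lia.
by have := modz_bounds (b %/ e%:Z)%Z hr; rewrite /psi_idx; case: eqP; case: eqP => //; lia.
Qed.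

Lemma rfloor_psi_arg e r (j : int) b : (0 < e)%N -> (0 < r)%N -> 0 <= j < e%:Z ->
  rfloor e j (psi_arg e r b) = rfloor r 0 (b %/ e%:Z)%Z + rfloor e j b - rfloor e 0 b.
Proof.
move=> he hr hj; rewrite /rfloor /psi_arg !subr0.
have hm := modz_bounds b he.
set q := (b %/ e%:Z)%Z; set i := (b %% e%:Z)%Z.
have hb : b = q * e%:Z + i by rewrite /q /i -divz_eq.
have -> : (q %/ r%:Z)%Z * e%:Z + i - j = (q %/ r%:Z)%Z * e%:Z + (i - j) by lia.
rewrite divzMDl; last lia.
have -> : b - j = q * e%:Z + (i - j) by lia.
by rewrite divzMDl; lia.
Qed.

Section Uglov.

Variables (e r : nat).
Hypotheses (he : (0 < e)%N) (hr : (0 < r)%N).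

Lemma psiK k z : (k < r)%N ->
  psi_idx e r (psi e r k.+1 z) = k /\ psi_arg e r (psi e r k.+1 z) = z.
Proof.
move=> hk; rewrite /psi_idx /psi_arg /psi.
have hm := modz_bounds z he.
rewrite (divzMDl_small _ he hm) (modzMDl_small _ he hm).
have -> : ((z %/ e%:Z)%Z + 1) * r%:Z - k.+1%:Z =
          (z %/ e%:Z)%Z * r%:Z + (r.-1 - k)%N%:Z by lia.
have hk' : 0 <= (r.-1 - k)%N%:Z < r%:Z by lia.
rewrite (divzMDl_small _ hr hk') (modzMDl_small _ hr hk').
by split; [lia | rewrite -divz_eq].
Qed.

Lemma psi_idxK b : psi e r (psi_idx e r b).+1 (psi_arg e r b) = b.
Proof.
rewrite /psi /psi_arg /psi_idx.
have hm := modz_bounds b he.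
rewrite (divzMDl_small _ he hm) (modzMDl_small _ he hm).
have hj := modz_bounds (b %/ e%:Z)%Z hr.
set q := (b %/ e%:Z)%Z.
have hq := divz_eq q r%:Z; have hb := divz_eq b e%:Z; rewrite -/q in hb.
set a := (q %/ r%:Z)%Z in hq *; set j := (q %% r%:Z)%Z in hq hj *.
have -> : (r.-1 - absz j)%N.+1%:Z = r%:Z - j by lia.
have -> : (a + 1) * r%:Z - (r%:Z - j) = q by rewrite hq; lia.
by rewrite {2}hb.
Qed.

(* Within each block of [r * e] consecutive integers, runner [k.+1] occupies the
   [r - 1 - k]-th subblock of length [e]. *)
Lemma psi_rev_ord (j : 'I_r) (c i : int) : 0 <= i < e%:Z ->
  psi e r (rev_ord j).+1 (c * e%:Z + i) = (c * r%:Z + j%:Z) * e%:Z + i.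
Proof.
move=> hi; rewrite /psi divzMDl_small // modzMDl_small //.
have hj := ltn_ord j; have -> : (r - j.+1).+1%:Z = r%:Z - j%:Z by lia.
lia.
Qed.

Lemma sum_dsum_psi (K : nat) (B B' : int -> Prop) (g : nat -> int -> int) :
  \sum_(k < r) dsum (fun z => B (psi e r k.+1 z)) (fun z => B' (psi e r k.+1 z)) (K * e) (g k) =
  dsum B B' (K * r * e) (fun b => g (psi_idx e r b) (psi_arg e r b)).
Proof.
set F := fun b => (ind (B b) - ind (B' b)) * g (psi_idx e r b) (psi_arg e r b).
have hK : (K * e + K * e = (K + K) * e)%N by rewrite mulnDl.
have block (k : 'I_r) :
    dsum (fun z => B (psi e r k.+1 z)) (fun z => B' (psi e r k.+1 z)) (K * e) (g k) =
    \sum_(a < K + K) \sum_(i < e) F (psi e r k.+1 ((- K%:Z + a%:Z) * e%:Z + i%:Z)).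
  rewrite /dsum /wsum hK.
  set G := fun z => (ind (B (psi e r k.+1 z)) - ind (B' (psi e r k.+1 z))) * g k z.
  transitivity (\sum_(m < (K + K) * e) G ((- K%:Z) * e%:Z + m%:Z)).
    by apply: eq_bigr => m _; rewrite PoszM mulNr.
  rewrite sum_ord_blocks; apply: eq_bigr => a _; apply: eq_bigr => i _.
  rewrite /F /G.
  by case: (psiK ((- K%:Z + a%:Z) * e%:Z + i%:Z) (ltn_ord k)) => -> ->.
rewrite (eq_bigr _ (fun k _ => block k)) exchange_big /=.
transitivity (\sum_(a < K + K) \sum_(j < r) \sum_(i < e)
     F (((- K%:Z + a%:Z) * r%:Z + j%:Z) * e%:Z + i%:Z)).
  apply: eq_bigr => a _; rewrite (reindex_inj rev_ord_inj) /=.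
  by apply: eq_bigr => j _; apply: eq_bigr => i _; rewrite psi_rev_ord //; have := ltn_ord i; lia.
transitivity (\sum_(a < K + K) \sum_(t < r * e) F ((- K%:Z + a%:Z) * (r * e)%N%:Z + t%:Z)).
  by apply: eq_bigr => a _; rewrite -sum_ord_blocks; apply: eq_bigr => t _;
    congr F; rewrite PoszM; lia.
rewrite -sum_ord_blocks /dsum /wsum.
have -> : (K * r * e + K * r * e = (K + K) * (r * e))%N by rewrite -mulnA mulnDl.
apply: eq_bigr => t _.
by have -> : - K%:Z * (r * e)%N%:Z + t%:Z = - (K * r * e)%N%:Z + t%:Z by rewrite !PoszM; nia.
Qed.

End Uglov.

(** * Existence and uniqueness of beta-sets *)

Lemma beta_nth_prefix_le p s p' s' i : (1 <= i)%N ->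
  (forall j, (1 <= j)%N -> (j < i)%N -> beta_nth p s j = beta_nth p' s' j) ->
  beta s p (beta_nth p' s' i) -> beta_nth p' s' i <= beta_nth p s i.
Proof.
move=> hi1 hpre [k [hk1 hk]]; rewrite leNgt; apply/negP => hlt.
have hki : (k < i)%N.
  case: (ltngtP k i) => // hik.
    by have := beta_nth_decr p s hik; rewrite /beta_nth in hlt hk *; lia.
  by rewrite hik in hk; rewrite /beta_nth in hlt hk; lia.
have := hpre k hk1 hki; rewrite -[beta_nth p s k]/(_ - _ + _) -hk.
by move/esym/beta_nth_inj; lia.
Qed.

Lemma beta_nth_eq p s p' s' : (forall b, beta s p b <-> beta s' p' b) ->
  forall i, (1 <= i)%N -> beta_nth p s i = beta_nth p' s' i.
Proof.
move=> hB i; elim: i {-2}i (leqnn i) => [|n IH] i hi h1; first lia.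
have hpre j : (1 <= j)%N -> (j < i)%N -> beta_nth p s j = beta_nth p' s' j.
  by move=> hj1 hj2; apply: IH => //; lia.
apply/eqP; rewrite eq_le; apply/andP; split.
  apply: beta_nth_prefix_le => // [j hj1 hj2 | ]; first by rewrite hpre.
  by apply/hB; exists i.
by apply: beta_nth_prefix_le => //; apply/hB; exists i.
Qed.

Lemma eq_part (p p' : Partition) :
  (forall i, (1 <= i)%N -> part_nth p i = part_nth p' i) -> p = p'.
Proof.
move=> h; apply: val_inj.
have hs : size (sval p) = size (sval p').
  apply/eqP; rewrite eqn_leq; apply/andP; split; rewrite leqNgt; apply/negP => hlt.
  - by have := @part_nth_gt0 p (size (sval p')).+1 isT hlt; rewrite h // part_nth_default.
  - by have := @part_nth_gt0 p' (size (sval p)).+1 isT hlt; rewrite -h // part_nth_default.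
by apply: (eq_from_nth hs) => n _; exact: (h n.+1 isT).
Qed.

Lemma beta_inj p s p' s' : (forall b, beta s p b <-> beta s' p' b) -> s = s' /\ p = p'.
Proof.
move=> hB; have hf := beta_nth_eq hB.
set i := (size (sval p) + size (sval p')).+1.
have := hf i isT; rewrite /beta_nth !part_nth_default; [|rewrite /i; lia|rewrite /i; lia].
move=> hs; have hs' : s = s' by lia.
by split => //; apply: eq_part => j hj; have := hf j hj; rewrite /beta_nth hs'; lia.
Qed.

Lemma beta_empty s b : beta s empty_part b <-> b < s.
Proof.
rewrite /beta /part_nth /=; split => [[i [hi ->]] | hb]; first by rewrite nth_nil; lia.
by exists (absz (s - b)); rewrite nth_nil; split; lia.
Qed.

Lemma beta_cons (p' : Partition) s' b0 : (forall x, beta s' p' x -> x < b0) ->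
  exists p, forall b, beta (s' + 1) p b <-> (beta s' p' b \/ b = b0).
Proof.
move=> hlt; have := hlt (beta_nth p' s' 1) (ex_intro _ 1%N (conj isT erefl)).
rewrite /beta_nth => h1; case: (posnP (absz (b0 - s'))) => [v0 | vpos].
  have -> : p' = empty_part.
    apply: eq_part => i hi; rewrite [RHS]/part_nth nth_nil.
    by have := part_nth_nonincr p' hi; lia.
  by exists empty_part => b; rewrite !beta_empty; lia.
have hp : is_part (absz (b0 - s') :: sval p').
  have := svalP p'; rewrite /is_part => /andP [hs h0].
  apply/andP; split; last by rewrite inE negb_or h0 andbT; lia.
  by move: hs h1; rewrite /part_nth; case: (sval p') => //= x l' -> ?; rewrite andbT; lia.
exists (exist (fun l => is_part l) _ hp) => b; split.
- move=> [[|[|i]] [hi ->]] //; first by right; rewrite /part_nth /=; lia.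
  by left; exists i.+1; split => //; rewrite /part_nth /=; lia.
- move=> [[i [hi ->]] | ->].
    by exists i.+1; split => //; rewrite /part_nth /=; case: i hi => //= i _; lia.
  by exists 1%N; split => //; rewrite /part_nth /=; lia.
Qed.

Lemma exists_beta_between (n : nat) (P : int -> Prop) (lo hi : int) :
  hi - lo <= n%:Z -> (forall b, b < lo -> P b) -> (forall b, hi <= b -> ~ P b) ->
  exists s p, forall b, beta s p b <-> P b.
Proof.
elim: n P lo hi => [|n IH] P lo hi hn hlo hhi.
  exists lo, empty_part => b; rewrite beta_empty; split; first exact: hlo.
  by move=> hb; case: (ltrP b lo) => // hb'; case: (hhi b) => //; lia.
case: (ltrP lo hi) => hlh; last first.
  exists lo, empty_part => b; rewrite beta_empty; split; first exact: hlo.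
  by move=> hb; case: (ltrP b lo) => // hb'; case: (hhi b) => //; lia.
case: (classic (P (hi - 1))) => hP; last first.
  apply: (IH P lo (hi - 1)) => //; first lia.
  by move=> b hb; case: (eqVneq b (hi - 1)) => [-> // | hne]; apply: hhi; lia.
pose Q b := P b /\ b <> hi - 1.
have [s' [p' hQ]] : exists s p, forall b, beta s p b <-> Q b.
  apply: (IH Q lo (hi - 1)); first lia.
    by move=> b hb; split; [exact: hlo | lia].
  by move=> b hb [hPb hb']; apply: (hhi b) => //; lia.
have [p hp] : exists p, forall b, beta (s' + 1) p b <-> (beta s' p' b \/ b = hi - 1).
  apply: beta_cons => x /hQ [hPx hx]; case: (ltrP x (hi - 1)) => // hx'.
  by case: (hhi x) => //; lia.
exists (s' + 1), p => b; rewrite hp hQ /Q.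
by split => [[[] | ->] | hb] //; case: (classic (b = hi - 1)); [right | left].
Qed.

Lemma exists_beta (P : int -> Prop) K : bounded P K -> exists s p, forall b, beta s p b <-> P b.
Proof. by move=> [h1 h2]; apply: (@exists_beta_between (K + K) P (- K%:Z) K%:Z) => //; lia. Qed.

(** * The maps eta and Phi *)

Definition mbeta m (c : mconf m) (k : 'I_m) : int -> Prop := beta (c.2 k) (c.1 k).
Definition mradius m (c : mconf m) (k : 'I_m) : nat := beta_radius (c.1 k) (c.2 k).

Lemma mconf_of_family m (Q : 'I_m -> int -> Prop) :
  (forall k, exists s p, forall z, beta s p z <-> Q k z) ->
  exists c : mconf m, forall k z, mbeta c k z <-> Q k z.
Proof.
move=> hQ; have hQ' k : exists sp : conf, forall z, beta sp.2 sp.1 z <-> Q k z.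
  by have [s [p hp]] := hQ k; exists (p, s).
pose sp k := proj1_sig (constructive_indefinite_description _ (hQ' k)).
exists ([ffun k => (sp k).1], [ffun k => (sp k).2]) => k z.
rewrite /mbeta /= !ffunE /sp.
by case: (constructive_indefinite_description _ (hQ' k)).
Qed.

Lemma CsetE e B (i : nat) c : (i < e)%N -> Cset e B i c <-> B (c * e%:Z + i%:Z).
Proof.
move=> hi; have he : (0 < e)%N by lia.
have hi' : 0 <= i%:Z < e%:Z by lia.
split => [[b [hB [hm ->]]] | hB].
  have hb := divz_eq b e%:Z; rewrite hm in hb.
  have -> : ((b - i%:Z) %/ e%:Z)%Z = (b %/ e%:Z)%Z by rewrite {1}hb addrK mulzK //; lia.
  by rewrite -hb.
exists (c * e%:Z + i%:Z); split => //; split; first exact: modzMDl_small.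
by rewrite addrK mulzK //; lia.
Qed.

Lemma eta_spec e (c : conf) (i : 'I_e) z :
  mbeta (eta e c) i z <-> Cset e (beta c.2 c.1) i z.
Proof.
pose P (rt : mconf e) := forall i z, mbeta rt i z <-> Cset e (beta c.2 c.1) i z.
suff : P (eta e c) by [].
apply: epsilon_spec; apply: mconf_of_family => {}i; apply: exists_beta (beta_radius c.1 c.2) _.
have [h1 h2] := bounded_beta (leqnn (beta_radius c.1 c.2)).
have hi := ltn_ord i.
by split => b hb; rewrite CsetE //; [apply: h1 | apply: h2]; nia.
Qed.

Section UglovInverse.

Variables (e r : nat).
Hypotheses (he : (0 < e)%N) (hr : (0 < r)%N).

Lemma Uglov_setE (c : mconf r) b :
  Uglov_set e r c b <-> mbeta c (Ordinal (psi_idx_lt e b hr)) (psi_arg e r b).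
Proof.
split => [[k [z [hz ->]]] | hb]; last by exists (Ordinal (psi_idx_lt e b hr)), (psi_arg e r b);
  rewrite psi_idxK.
have [hk hz'] := psiK he hr z (ltn_ord k).
have -> : Ordinal (psi_idx_lt e (psi e r k.+1 z) hr) = k by apply: val_inj.
by rewrite hz'.
Qed.

Lemma psi_lt (K0 : nat) k z : (k < r)%N -> z < K0%:Z -> psi e r k.+1 z < ((K0 + 2) * r * e)%N%:Z.
Proof.
move=> hk hz; rewrite /psi.
have hm := modz_bounds z he; have hb := divz_eq z e%:Z.
set a := (z %/ e%:Z)%Z in hb *; set i := (z %% e%:Z)%Z in hb hm *.
have ha : a < K0%:Z by nia.
by rewrite !PoszM; nia.
Qed.

Lemma psi_arg_lt (K0 : nat) b : b < - ((K0 + 2) * r * e)%N%:Z -> psi_arg e r b < - K0%:Z.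
Proof.
move=> hb; rewrite /psi_arg.
have hm := modz_bounds b he; have hbq := divz_eq b e%:Z.
set q := (b %/ e%:Z)%Z in hbq *; set i := (b %% e%:Z)%Z in hbq hm *.
have hj := modz_bounds q hr; have hq := divz_eq q r%:Z.
set a := (q %/ r%:Z)%Z in hq *; set j := (q %% r%:Z)%Z in hq hj *.
move: hb; rewrite !PoszM => hb.
have ha : a < - (K0%:Z + 2) by nia.
nia.
Qed.

Lemma bounded_Uglov_set (c : mconf r) :
  bounded (Uglov_set e r c) (((\sum_(k < r) mradius c k) + 2) * r * e).
Proof.
set K0 := \sum_(k < r) mradius c k.
have hK k : (mradius c k <= K0)%N by rewrite /K0 (bigD1 k) //= leq_addr.
split=> b hb; first by rewrite Uglov_setE; apply: (bounded_beta (hK _)).1; apply: psi_arg_lt.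
move=> [k [z [hz hbz]]].
have hzK : z < K0%:Z.
  by case: (ltrP z K0%:Z) => // hz'; case: ((bounded_beta (hK k)).2 z hz' hz).
by have := psi_lt (ltn_ord k) hzK; rewrite -hbz; lia.
Qed.

Lemma Psi_spec (c : mconf r) b :
  beta (Psi e r c).2 (Psi e r c).1 b <-> Uglov_set e r c b.
Proof.
pose P (p : conf) := forall b, beta p.2 p.1 b <-> Uglov_set e r c b.
suff : P (Psi e r c) by [].
apply: epsilon_spec; have [s [p hp]] := exists_beta (bounded_Uglov_set c).
by exists (p, s).
Qed.

Lemma bounded_psi_preim (B : int -> Prop) K (k : nat) : (k < r)%N ->
  bounded B K -> bounded (fun z => B (psi e r k.+1 z)) (K + e).
Proof.
move=> hk [h1 h2]; split => z hz; [apply: h1 | apply: h2]; rewrite /psi;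
  have hm := modz_bounds z he; have hb := divz_eq z e%:Z;
  set a := (z %/ e%:Z)%Z in hb *; set i := (z %% e%:Z)%Z in hb hm *.
- have ha : a < 0 by nia.
  nia.
- have ha : K%:Z <= a * e%:Z by nia.
  nia.
Qed.

Lemma Psi_surj (p : conf) : exists c, Psi e r c = p.
Proof.
have hB := bounded_beta (leqnn (beta_radius p.1 p.2)).
have [c hc] : exists c : mconf r, forall k z, mbeta c k z <-> beta p.2 p.1 (psi e r k.+1 z).
  by apply: mconf_of_family => k; apply: exists_beta (bounded_psi_preim (ltn_ord k) hB).
exists c; have [] : (Psi e r c).2 = p.2 /\ (Psi e r c).1 = p.1.
  apply: beta_inj => b; rewrite Psi_spec Uglov_setE hc psi_idxK //.
by case: (Psi e r c) => a b /= -> ->; case: p {hB hc}.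
Qed.

Lemma Phi_spec (p : conf) k z : mbeta (Phi e r p) k z <-> beta p.2 p.1 (psi e r k.+1 z).
Proof.
have hP : Psi e r (Phi e r p) = p.
  exact: (epsilon_spec (inhabits (default_mconf r)) (fun c => Psi e r c = p) (Psi_surj p)).
have [hk hz] := psiK he hr z (ltn_ord k).
have := Psi_spec (Phi e r p) (psi e r k.+1 z); rewrite hP => ->; rewrite Uglov_setE.
have -> : Ordinal (psi_idx_lt e (psi e r k.+1 z) hr) = k by apply: val_inj.
by rewrite hz.
Qed.

End UglovInverse.

(** * Blocks *)

Lemma size_res_seq1 N p s : size (res_seq1 N p s) = psize p.
Proof.
rewrite /res_seq1 size_allpairs_dep /psize.
rewrite (eq_map (fun x => size_iota 1 (part_nth p x))).
have -> : iota 1 (size (sval p)) = map succn (iota 0 (size (sval p))) by rewrite -(iotaDl 1).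
by rewrite -map_comp -[sval p in RHS](mkseq_nth 0%N).
Qed.

Lemma size_res_seq N m c : size (res_seq N m c) = mpsize m c.1.
Proof.
rewrite /res_seq size_flatten /shape -map_comp /mpsize sumnE big_map big_enum /=.
by apply: eq_bigr => k _; rewrite size_res_seq1.
Qed.

Lemma count_res_seq N m c j : (count_mem j (res_seq N m c))%:Z =
  \sum_(k < m) (count_mem j (res_seq1 N (c.1 k) (c.2 k)))%:Z.
Proof.
rewrite /res_seq count_flatten -map_comp sumnE big_map big_enum /=.
by rewrite -(big_morph _ PoszD (erefl 0%:Z)).
Qed.

Lemma res_seq_range N m c x : (0 < N)%N -> x \in res_seq N m c -> 0 <= x < N%:Z.
Proof.
move=> hN /flattenP [_ /mapP [k _ ->]] /flattenP [_ /mapP [y _ ->] /mapP [z _ ->]].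
exact: modz_bounds.
Qed.

Lemma block_eqE N m c d : (0 < N)%N ->
  block_eq N m c d <-> c.2 = d.2 /\ forall j, 0 <= j < N%:Z ->
    (count_mem j (res_seq N m c))%:Z = (count_mem j (res_seq N m d))%:Z.
Proof.
move=> hN; split => [[h1 [_ h3]] | [h1 h2]]; first by split => // j _; rewrite (permP h3).
have hp : perm_eq (res_seq N m c) (res_seq N m d).
  apply/allP => x hx; apply/eqP.
  have hx' : 0 <= x < N%:Z by move: hx; rewrite mem_cat => /orP [] /res_seq_range; apply.
  by have [] := h2 x hx'.
by split => //; split => //; rewrite -(size_res_seq N c) -(size_res_seq N d) (perm_size hp).
Qed.

Lemma count_res_seq_diff N m (c d : mconf m) j K : (0 < N)%N -> 0 <= j < N%:Z ->
  c.2 = d.2 -> (forall k, mradius c k <= K /\ mradius d k <= K)%N ->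
  (count_mem j (res_seq N m c))%:Z - (count_mem j (res_seq N m d))%:Z =
  \sum_(k < m) dsum (mbeta c k) (mbeta d k) K (rfloor N j).
Proof.
move=> hN hj hcd hK; rewrite !count_res_seq -sumrB; apply: eq_bigr => k _.
have [hc hd] := hK k; rewrite /mradius hcd in hc.
by rewrite /mbeta hcd (count_res_seq1_diff hN hj hc hd).
Qed.

Lemma res_seq1_shift N p s s0 : (0 < N)%N ->
  res_seq1 N p s = map (fun v => ((v + (s - s0)) %% N%:Z)%Z) (res_seq1 N p s0).
Proof.
move=> hN; rewrite /res_seq1 map_flatten -map_comp; congr flatten.
apply: eq_map => x /=; rewrite -map_comp; apply: eq_map => y /=.
by rewrite modzDml; congr (_ %% _)%Z; lia.
Qed.

Lemma telescope_eq0 (r : nat) (Y : nat -> int) : (0 < r)%N -> Y r = Y 0%N ->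
  (forall j, (j < r)%N -> Y j = 0) <->
  ((forall k, (k < r)%N -> Y (r.-1 - k)%N - Y (r - k)%N = 0) /\ Y 0%N = 0).
Proof.
move=> hr hY; split => [h | [h h0]].
  have h0 : Y 0%N = 0 by exact: h 0%N hr.
  split => // k hk; rewrite h; last lia.
  case: (ltnP (r - k) r) => hrk; first by rewrite h.
  have -> : (r - k)%N = r by lia.
  by rewrite hY h0 subrr.
have hsuffix n : (n <= r)%N -> Y (r - n)%N = 0.
  elim: n => [|n IH] hn; first by rewrite subn0 hY.
  have := h n ltac:(lia); rewrite IH; last lia.
  have -> : (r.-1 - n)%N = (r - n.+1)%N by lia.
  by rewrite subr0.
move=> j hj; have := hsuffix (r - j)%N ltac:(lia).
by have -> : (r - (r - j))%N = j by lia.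
Qed.

(** * Comparing the two block relations *)

Section Blocks.

Variables (e r : nat) (lam mu : Partition) (s : int).
Hypotheses (he : (0 < e)%N) (hr : (0 < r)%N) (hsim : sim_e e lam mu).

Local Notation B := (beta s lam).
Local Notation B' := (beta s mu).
Local Notation K0 := (beta_radius lam s + beta_radius mu s)%N.

Lemma dsum_widen_lam_mu K h : (K0 <= K)%N -> dsum B B' K h = dsum B B' K0 h.
Proof. by move=> hK; apply: dsum_widen => //; apply: bounded_beta; lia. Qed.

Lemma sim_dsum1 : dsum B B' K0 (fun _ => 1) = 0.
Proof. by rewrite -charge_diff_dsum ?subrr //; lia. Qed.

Lemma sim_dsum_rfloor j : 0 <= j < e%:Z -> dsum B B' K0 (rfloor e j) = 0.
Proof.
move=> hj; have [s0 [_ [_ /= hp]]] := hsim.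
have hps : perm_eq (res_seq1 e lam s) (res_seq1 e mu s).
  by rewrite (res_seq1_shift lam s s0 he) (res_seq1_shift mu s s0 he) perm_map.
by rewrite -count_res_seq1_diff //; [rewrite (permP hps) subrr | lia | lia].
Qed.

Lemma sim_dsum_modz (i : nat) : (i < e)%N ->
  dsum B B' K0 (fun b => ((absz (b %% e%:Z)%Z == i) : int)) = 0.
Proof.
move=> hi; rewrite (eq_dsum _ _ _ (fun b => eq_modz_rfloor b hi)) dsumB sim_dsum_rfloor;
  last lia.
case: (ltnP i.+1 e) => hi1; first by rewrite sim_dsum_rfloor ?subrr //; lia.
have -> : i.+1 = e by lia.
by rewrite (eq_dsum _ _ _ (fun b => rfloorNN b he)) dsumB sim_dsum_rfloor ?sim_dsum1 ?subrr //; lia.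
Qed.

(* X_j of the proof idea. *)
Definition quot_count_diff (j : nat) : int :=
  dsum B B' K0 (fun b => rfloor r j%:Z (b %/ e%:Z)%Z).

Local Notation X := quot_count_diff.

Lemma quot_count_diff_r : X r = X 0%N.
Proof.
by rewrite /X (eq_dsum _ _ _ (fun b => rfloorNN (b %/ e%:Z)%Z hr)) dsumB sim_dsum1 subr0.
Qed.

Local Notation ce := (eta e (lam, s)).
Local Notation de := (eta e (mu, s)).

Lemma eta_dsum : exists K, (forall i, mradius ce i <= K /\ mradius de i <= K)%N /\
  forall g : nat -> int -> int, \sum_(i < e) dsum (mbeta ce i) (mbeta de i) K (g i) =
    dsum B B' K0 (fun b => g (absz (b %% e%:Z)%Z) (b %/ e%:Z)%Z).
Proof.
set K := (\sum_(i < e) (mradius ce i + mradius de i) + K0)%N.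
exists K; split => [i | g]; first by rewrite /K (bigD1 i) //=; lia.
have hK0 : (K0 <= K * e)%N by rewrite /K; nia.
rewrite -(dsum_widen_lam_mu _ hK0) -sum_dsum_residues //; apply: eq_bigr => i _.
by apply: eq_dsum_pred => z; rewrite eta_spec CsetE.
Qed.

Lemma eta_charge_eq : ce.2 = de.2.
Proof.
have [K [hK hsum]] := eta_dsum.
apply/ffunP => i; apply/eqP; rewrite -subr_eq0; apply/eqP.
rewrite (charge_diff_dsum (hK i).1 (hK i).2).
rewrite -(sum_delta_mul i (fun i' => dsum (mbeta ce i') (mbeta de i') K (fun _ => 1))).
rewrite (eq_bigr (fun i' => dsum (mbeta ce i') (mbeta de i') K
                              (fun _ => ((i' == i :> nat) : int)))); last first.
  by move=> i' _; rewrite [RHS]dsumC.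
by rewrite (hsum (fun i' _ => ((i' == i :> nat) : int))) sim_dsum_modz.
Qed.

Lemma eta_count_diff j : (j < r)%N ->
  (count_mem j%:Z (res_seq r e ce))%:Z - (count_mem j%:Z (res_seq r e de))%:Z = X j.
Proof.
move=> hj; have [K [hK hsum]] := eta_dsum.
rewrite (count_res_seq_diff hr _ eta_charge_eq hK); last lia.
exact: (hsum (fun _ => rfloor r j%:Z)).
Qed.

Lemma block_eq_eta_iff : block_eq r e ce de <-> forall j, (j < r)%N -> X j = 0.
Proof.
rewrite block_eqE //; split => [[_ h] j hj | h].
  by rewrite -eta_count_diff // h ?subrr //; lia.
split => [| j hj]; first exact: eta_charge_eq.
apply/eqP; rewrite -subr_eq0; apply/eqP.
have -> : j = (absz j)%:Z by lia.
by rewrite eta_count_diff ?h //; lia.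
Qed.

Local Notation cp := (Phi e r (lam, s)).
Local Notation dp := (Phi e r (mu, s)).

Lemma Phi_dsum : exists K, (forall k, mradius cp k <= K /\ mradius dp k <= K)%N /\
  forall g : nat -> int -> int, \sum_(k < r) dsum (mbeta cp k) (mbeta dp k) K (g k) =
    dsum B B' K0 (fun b => g (psi_idx e r b) (psi_arg e r b)).
Proof.
set K := (\sum_(k < r) (mradius cp k + mradius dp k) + K0)%N.
have hKe : (K <= K * e)%N by rewrite leq_pmulr.
exists (K * e)%N; split => [k | g].
  have : (mradius cp k + mradius dp k <= K)%N by rewrite /K (bigD1 k) //=; lia.
  lia.
have hK0 : (K0 <= K * r * e)%N by rewrite /K; nia.
rewrite -(dsum_widen_lam_mu _ hK0) -sum_dsum_psi //; apply: eq_bigr => k _.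
by apply: eq_dsum_pred => z; apply: Phi_spec.
Qed.

Lemma Phi_charge_diff (k : 'I_r) : cp.2 k - dp.2 k = X (r.-1 - k) - X (r - k).
Proof.
have [K [hK hsum]] := Phi_dsum.
rewrite (charge_diff_dsum (hK k).1 (hK k).2).
rewrite -(sum_delta_mul k (fun k' => dsum (mbeta cp k') (mbeta dp k') K (fun _ => 1))).
rewrite (eq_bigr (fun k' => dsum (mbeta cp k') (mbeta dp k') K
                              (fun _ => ((k' == k :> nat) : int)))); last first.
  by move=> k' _; rewrite [RHS]dsumC.
rewrite (hsum (fun k' _ => ((k' == k :> nat) : int))).
by rewrite (eq_dsum _ _ _ (fun b => eq_psi_idx_rfloor e b (ltn_ord k))) dsumB.
Qed.

Lemma Phi_count_diff j : cp.2 = dp.2 -> 0 <= j < e%:Z ->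
  (count_mem j (res_seq e r cp))%:Z - (count_mem j (res_seq e r dp))%:Z = X 0%N.
Proof.
move=> hcd hj; have [K [hK hsum]] := Phi_dsum.
rewrite (count_res_seq_diff he hj hcd hK) (hsum (fun _ => rfloor e j)).
rewrite (eq_dsum _ _ _ (fun b => rfloor_psi_arg b he hr hj)) dsumB dsumD.
by rewrite sim_dsum_rfloor // (sim_dsum_rfloor (j := 0)) ?subr0 ?addr0 //; lia.
Qed.

Lemma block_eq_Phi_iff : block_eq e r cp dp <->
  (forall k, (k < r)%N -> X (r.-1 - k) - X (r - k) = 0) /\ X 0%N = 0.
Proof.
rewrite block_eqE //; split => [[hcd h] | [h1 h0]].
  split => [k hk | ]; first by rewrite -(Phi_charge_diff (Ordinal hk)) hcd subrr.
  by rewrite -(Phi_count_diff (j := 0) hcd) ?h ?subrr //; lia.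
have hcd : cp.2 = dp.2.
  by apply/ffunP => k; apply/eqP; rewrite -subr_eq0 Phi_charge_diff h1.
by split => // j hj; apply/eqP; rewrite -subr_eq0 (Phi_count_diff hcd hj) h0.
Qed.

End Blocks.

Unset Implicit Arguments.

Theorem theorem2p13 (e r : nat) (he : (2 <= e)%N) (hr : (2 <= r)%N)
    (lam mu : Partition) (hsim : sim_e e lam mu) (s : int) :
  block_eq r e (eta e (lam, s)) (eta e (mu, s)) <->
  block_eq e r (Phi e r (lam, s)) (Phi e r (mu, s)).
Proof.
have he0 : (0 < e)%N by lia.
have hr0 : (0 < r)%N by lia.
rewrite (block_eq_eta_iff s he0 hr0 hsim) (block_eq_Phi_iff s he0 hr0 hsim).
exact: telescope_eq0 hr0 (quot_count_diff_r lam mu s he0 hr0).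
Qed.
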